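(* There is an infinite family of directed graphs (with unit arc lengths) such that, with $n$ the number of vertices, the distance greedy algorithm d-HHL finds a hierarchical hub labeling of size $\Omega(n^{3/2})$ while the optimal hierarchical hub labeling has size $O(n)$.
   Context: For a directed graph $G=(V,E)$, $n=|V|$, a hub labeling assigns forward and backward labels $L_f(v),L_b(v)\subseteq V$ such that for every ordered pair $(u,w)$ with $w$ reachable from $u$, $L_f(u)\cap L_b(w)$ contains a vertex on a shortest $u$–$w$ path; its size is $\sum_v(|L_f(v)|+|L_b(v)|)$. It is hierarchical (HHL) if there is a bijection $\pi:V\to\{1,\dots,n\}$ with $u\in L_f(v)\cup L_b(v)\Rightarrow\pi(u)\le\pi(v)$. d-HHL: start with empty labels; $U$ is the set of uncovered pairs. Each pair gets weight $W(u,w)=0$ if $\mathrm{dist}(u,w)=0$ and $n^{2\lfloor\log_2\mathrm{dist}(u,w)\rfloor}$ otherwise. For each not-yet-selected vertex $v$, the center graph is the bipartite graph with two copies $X,Y$ of $V$ and an arc $(u,w)$ of weight $W(u,w)$ for each $(u,w)\in U$ having a shortest $u$–$w$ path through $v$. Each iteration selects a not-yet-selected $v$ whose center graph has the largest total arc weight and adds $v$ to $L_f(u)$ for all non-isolated $u\in X$ and to $L_b(w)$ for all non-isolated $w\in Y$, until all pairs are covered. *)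

(* Directed graphs with unit arc lengths: a relation e on a finType V. *)
From mathcomp Require Import all_boot.
Set Implicit Arguments. Unset Strict Implicit. Unset Printing Implicit Defensive.

Section HHL.
Variables (V : finType) (e : rel V).

Definition reachable (u w : V) : bool := connect e u w.

Definition walk_len (k : nat) (u w : V) : bool :=
  [exists p : k.-tuple V, path e u p && (last u p == w)].

(* distance (number of arcs of a shortest path); = #|V| if unreachable *)
Definition dist (u w : V) : nat :=
  find (fun k => walk_len k u w) (iota 0 #|V|).

Definition on_sp (u w x : V) : bool :=
  reachable u w &&
  [exists p : (dist u w).-tuple V,
     [&& path e u p, last u p == w & x \in u :: p]].

Definition labels := V -> {set V}.

Definition covered (Lf Lb : labels) (u w : V) : bool :=
  [exists x, [&& x \in Lf u, x \in Lb w & on_sp u w x]].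

Definition is_hub_labeling (Lf Lb : labels) : Prop :=
  forall u w, reachable u w -> covered Lf Lb u w.

Definition hl_size (Lf Lb : labels) : nat :=
  \sum_(v : V) (#|Lf v| + #|Lb v|).

(* hierarchical: bijection pi : V -> {1..n} (here 'I_n, 0-based) *)
Definition is_hierarchical (Lf Lb : labels) : Prop :=
  exists pi : V -> 'I_#|V|, bijective pi /\
    forall u v, u \in Lf v :|: Lb v -> (pi u <= pi v)%N.

Definition is_HHL (Lf Lb : labels) : Prop :=
  is_hub_labeling Lf Lb /\ is_hierarchical Lf Lb.

Definition uncov (Lf Lb : labels) (u w : V) : bool :=
  reachable u w && ~~ covered Lf Lb u w.

Definition pair_weight (u w : V) : nat :=
  if dist u w == 0 then 0 else #|V| ^ (2 * trunc_log 2 (dist u w)).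

Definition center_arc (Lf Lb : labels) (v u w : V) : bool :=
  uncov Lf Lb u w && on_sp u w v.

Definition center_weight (Lf Lb : labels) (v : V) : nat :=
  \sum_(u : V) \sum_(w : V | center_arc Lf Lb v u w) pair_weight u w.

Definition dhhl_step (S : {set V}) (Lf Lb : labels)
    (S' : {set V}) (Lf' Lb' : labels) : Prop :=
  exists v, [/\ v \notin S,
    (forall v', v' \notin S -> center_weight Lf Lb v' <= center_weight Lf Lb v),
    S' = v |: S,
    (forall u, Lf' u = if [exists w, center_arc Lf Lb v u w] then v |: Lf u else Lf u) &
    (forall w, Lb' w = if [exists u, center_arc Lf Lb v u w] then v |: Lb w else Lb w)].

(* dhhl_run S Lf Lb Rf Rb : continuing from state (S,Lf,Lb), some execution
   (with arbitrary tie-breaking) terminates with output labeling (Rf,Rb). *)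
Inductive dhhl_run : {set V} -> labels -> labels -> labels -> labels -> Prop :=
| dhhl_done S Lf Lb :
    (forall u w, ~~ uncov Lf Lb u w) -> dhhl_run S Lf Lb Lf Lb
| dhhl_next S Lf Lb S' Lf' Lb' Rf Rb :
    (exists u w, uncov Lf Lb u w) ->
    dhhl_step S Lf Lb S' Lf' Lb' ->
    dhhl_run S' Lf' Lb' Rf Rb -> dhhl_run S Lf Lb Rf Rb.

Definition empty_labels : labels := fun _ => set0.

Definition dhhl_output (Rf Rb : labels) : Prop :=
  dhhl_run set0 empty_labels empty_labels Rf Rb.

End HHL.

From HB Require Import structures.
From mathcomp Require Import all_boot zify.
Set Implicit Arguments. Unset Strict Implicit. Unset Printing Implicit Defensive.

(* In the graph below, m sources reach m hubs through a single center, and each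
   hub is the middle of four shortest paths of length 4 (two chains of length 3
   enter it, two arcs leave it).  Pairs at distance 4 weigh n^4 and all other
   pairs at most n^2, so while some hub is unselected its center graph weighs at
   least 4 n^4, whereas any non-hub weighs at most 3 n^4 (it lies on at most two
   pairs at distance 4): d-HHL selects the m hubs first.  Nothing on a
   source-hub shortest path has been selected before that hub, so each hub
   enters the forward label of every source, and the output has at least
   m^2 = Omega(n^2) entries.  Ranking the center below the hubs below the rest
   gives instead a hierarchical labeling with at most five hubs per vertex. *)

Section Greedy.
Variables (V : finType) (e : rel V).
Implicit Types (Lf Lb : labels V) (S : {set V}) (u v w : V).

Lemma pair_weight_dist4 u w : dist e u w = 4 -> pair_weight e u w = #|V| ^ 4.
Proof. by rewrite /pair_weight => ->. Qed.

Lemma pair_weight_dist_le3 u w : dist e u w <= 3 -> pair_weight e u w <= #|V| ^ 2.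
Proof.
rewrite /pair_weight; case: eqP => // _ le_d3.
have V_gt0 : 0 < #|V| by apply/card_gt0P; exists u.
rewrite leq_pexp2l //; have := leq_trunc_log 2 le_d3.
by rewrite (_ : trunc_log 2 3 = 1) //; lia.
Qed.

Lemma covered_subset Lf Lb Lf' Lb' u w :
  (forall x, Lf x \subset Lf' x) -> (forall x, Lb x \subset Lb' x) ->
  covered e Lf Lb u w -> covered e Lf' Lb' u w.
Proof.
move=> sub_f sub_b /existsP[x /and3P[xf xb xsp]]; apply/existsP; exists x.
by rewrite (subsetP (sub_f u)) ?(subsetP (sub_b w)).
Qed.

Lemma uncov_ext Lf Lb Lf' Lb' u w : Lf =1 Lf' -> Lb =1 Lb' ->
  uncov e Lf Lb u w = uncov e Lf' Lb' u w.
Proof.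
move=> ef eb; congr (_ && ~~ _); apply: eq_existsb => x.
by rewrite ef eb.
Qed.

Definition select_fwd Lf Lb v : labels V := fun u =>
  if [exists w, center_arc e Lf Lb v u w] then v |: Lf u else Lf u.

Definition select_bwd Lf Lb v : labels V := fun w =>
  if [exists u, center_arc e Lf Lb v u w] then v |: Lb w else Lb w.

Lemma select_fwd_sub Lf Lb v u : Lf u \subset select_fwd Lf Lb v u.
Proof. by rewrite /select_fwd; case: ifP => _; rewrite ?subsetUr. Qed.

Lemma select_bwd_sub Lf Lb v w : Lb w \subset select_bwd Lf Lb v w.
Proof. by rewrite /select_bwd; case: ifP => _; rewrite ?subsetUr. Qed.

Lemma select_fwd_subU Lf Lb v u : select_fwd Lf Lb v u \subset v |: Lf u.
Proof. by rewrite /select_fwd; case: ifP => _; rewrite ?subsetUr. Qed.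

Lemma select_bwd_subU Lf Lb v w : select_bwd Lf Lb v w \subset v |: Lb w.
Proof. by rewrite /select_bwd; case: ifP => _; rewrite ?subsetUr. Qed.

Lemma mem_select_fwd Lf Lb v u w :
  center_arc e Lf Lb v u w -> v \in select_fwd Lf Lb v u.
Proof.
by move=> arc; rewrite /select_fwd ifT ?setU11 //; apply/existsP; exists w.
Qed.

Lemma mem_select_bwd Lf Lb v u w :
  center_arc e Lf Lb v u w -> v \in select_bwd Lf Lb v w.
Proof.
by move=> arc; rewrite /select_bwd ifT ?setU11 //; apply/existsP; exists u.
Qed.

Lemma covered_select Lf Lb v u w : center_arc e Lf Lb v u w ->
  covered e (select_fwd Lf Lb v) (select_bwd Lf Lb v) u w.
Proof.
move=> arc; apply/existsP; exists v.
by rewrite (mem_select_fwd arc) (mem_select_bwd arc); case/andP: arc.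
Qed.

Lemma uncov_select Lf Lb v u w : uncov e Lf Lb u w -> ~~ on_sp e u w v ->
  uncov e (select_fwd Lf Lb v) (select_bwd Lf Lb v) u w.
Proof.
case/andP=> uw not_cov v_off; rewrite /uncov uw; apply: contra not_cov.
case/existsP=> x /and3P[xf xb xsp]; have xv : x != v by apply: contraNneq v_off => <-.
move: xf xb => /(subsetP (select_fwd_subU _ _ _ _)) + /(subsetP (select_bwd_subU _ _ _ _)).
by rewrite !in_setU1 (negbTE xv) /= => xf xb; apply/existsP; exists x; rewrite xf xb.
Qed.

Lemma dhhl_step_select S Lf Lb v : v \notin S ->
  (forall v', v' \notin S -> center_weight e Lf Lb v' <= center_weight e Lf Lb v) ->
  dhhl_step e S Lf Lb (v |: S) (select_fwd Lf Lb v) (select_bwd Lf Lb v).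
Proof. by move=> vS vmax; exists v. Qed.

Lemma center_weight_pairs Lf Lb v : center_weight e Lf Lb v =
  \sum_(p : V * V | center_arc e Lf Lb v p.1 p.2) pair_weight e p.1 p.2.
Proof. by rewrite /center_weight pair_big_dep. Qed.

End Greedy.

Section GradedGraph.
Variables (V : finType) (e : rel V) (lvl : V -> nat).
Hypothesis edge_lvl : forall u v, e u v -> lvl v = (lvl u).+1.
Hypothesis lvl_lt_card : forall u, lvl u < #|V|.

Lemma path_lvl u p : path e u p -> lvl (last u p) = lvl u + size p.
Proof.
elim: p u => [|v p IHp] u /=; first by rewrite addn0.
by case/andP=> /edge_lvl uv /IHp ->; rewrite uv addSnnS.
Qed.

Lemma reachable_lvl u w : reachable e u w -> lvl u <= lvl w.
Proof. by case/connectP=> p /path_lvl + -> => ->; rewrite leq_addr. Qed.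

Lemma walk_lenE k u w :
  walk_len e k u w = reachable e u w && (lvl w == lvl u + k).
Proof.
apply/existsP/andP => [[p /andP[up /eqP <-]]|[/connectP[p up ->] /eqP]].
  by split; [apply/connectP; exists p | rewrite path_lvl // size_tuple].
rewrite path_lvl // => /addnI/eqP sz_p.
by exists (Tuple sz_p); rewrite /= up eqxx.
Qed.

Lemma dist_lvl u w : reachable e u w -> dist e u w = lvl w - lvl u.
Proof.
move=> uw; have le_uw := reachable_lvl uw.
rewrite /dist (eq_find (a2 := pred1 (lvl w - lvl u))); last first.
  by move=> k; rewrite walk_lenE uw /=; apply/eqP/eqP; lia.
have d_lt : lvl w - lvl u < #|V| by have := lvl_lt_card w; lia.
rewrite -/(index _ _) -[X in index X](nth_iota 0 0 d_lt).
by rewrite index_uniq ?size_iota ?iota_uniq.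
Qed.

Lemma on_sp_lvl u w x : on_sp e u w x = reachable e u x && reachable e x w.
Proof.
apply/idP/andP => [|[ux xw]].
  case/andP=> _ /existsP[[p _] /and3P[/= up /eqP <- xp]].
  case/splitPl: xp up => p1 p2 x_last; rewrite cat_path last_cat -x_last.
  by case/andP=> up1 xp2; split; apply/connectP; [exists p1 | exists p2].
have uw : reachable e u w := connect_trans ux xw.
move: ux xw => /connectP[p1 up1 x_last] /connectP[p2 xp2 w_last].
have sz : size (p1 ++ p2) == dist e u w.
  rewrite dist_lvl // w_last path_lvl // x_last path_lvl // size_cat.
  by apply/eqP; lia.
rewrite /on_sp uw; apply/existsP; exists (Tuple sz) => /=.
rewrite cat_path last_cat -x_last up1 xp2 -w_last eqxx /=.
by rewrite -cat_cons mem_cat x_last mem_last.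
Qed.

Lemma on_sp_source u w : reachable e u w -> on_sp e u w u.
Proof. by rewrite on_sp_lvl => ->; rewrite /reachable connect0. Qed.

Definition selected_cover (S : {set V}) (Lf Lb : labels V) :=
  forall v, v \in S -> forall u w, on_sp e u w v -> covered e Lf Lb u w.

Lemma selected_cover_select S Lf Lb v : selected_cover S Lf Lb ->
  selected_cover (v |: S) (select_fwd e Lf Lb v) (select_bwd e Lf Lb v).
Proof.
move=> cov v'; rewrite in_setU1 => /predU1P[-> | v'S] u w sp.
  have [c|not_c] := boolP (covered e Lf Lb u w).
    exact: covered_subset (select_fwd_sub _ _ _ _) (select_bwd_sub _ _ _ _) c.
  apply: covered_select; rewrite /center_arc /uncov not_c sp.
  by move: sp => /andP[-> _].
exact: covered_subset (select_fwd_sub _ _ _ _) (select_bwd_sub _ _ _ _) (cov _ v'S _ _ sp).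
Qed.

Lemma dhhl_run_exists S Lf Lb : selected_cover S Lf Lb ->
  exists Rf Rb, dhhl_run e S Lf Lb Rf Rb.
Proof.
have [k] := ubnP #|~: S|; elim: k S Lf Lb => // k IHk S Lf Lb ltS cov.
case: (pickP (fun p : V * V => uncov e Lf Lb p.1 p.2)) => [[u w] /= uw | none].
  have uS : u \in ~: S.
    rewrite inE; apply/negP => uS; case/andP: uw => reach_uw.
    by rewrite (cov u uS u w (on_sp_source reach_uw)).
  case: (arg_maxnP (center_weight e Lf Lb) uS) => v /setCP/negP vS vmax.
  have [Rf [Rb run]] : exists Rf Rb,
      dhhl_run e (v |: S) (select_fwd e Lf Lb v) (select_bwd e Lf Lb v) Rf Rb.
    apply: IHk; last exact: selected_cover_select.
    by move: ltS; have := cardsC (v |: S); have := cardsC S; rewrite cardsU1 vS; lia.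
  exists Rf, Rb; apply: dhhl_next run; first by exists u, w.
  by apply: dhhl_step_select => // v' v'S; apply: vmax; apply/setCP/negP.
by exists Lf, Lb; apply: dhhl_done => u w; rewrite (none (u, w)).
Qed.

Lemma dhhl_output_exists : exists Rf Rb, dhhl_output e Rf Rb.
Proof. by apply: dhhl_run_exists => v; rewrite inE. Qed.

End GradedGraph.

Section Hierarchy.
Variables (V : finType) (code : V -> nat).

Lemma card_below_lt u : #|[set y | code y < code u]| < #|V|.
Proof.
rewrite -[#|V|]cardsT; apply: proper_card; rewrite properT.
by apply/eqP => /setP/(_ u); rewrite !inE ltnn.
Qed.

Definition rank_ord u : 'I_#|V| := Ordinal (card_below_lt u).

Lemma rank_ord_lt u v : code u < code v -> rank_ord u < rank_ord v.
Proof.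
move=> uv; apply: proper_card; rewrite properE; apply/andP; split.
  by apply/subsetP => y; rewrite !inE => /ltn_trans; apply.
by apply/subsetPn; exists u; rewrite !inE ?ltnn.
Qed.

Lemma rank_ord_bij : injective code -> bijective rank_ord.
Proof.
move=> code_inj; apply: inj_card_bij; last by rewrite card_ord.
move=> u v eq_uv; apply: code_inj.
by case: (ltngtP (code u) (code v)) => // /rank_ord_lt; rewrite eq_uv ltnn.
Qed.

End Hierarchy.

Lemma hierarchical_of_rank (V : finType) (Lf Lb : labels V) (rank : V -> nat) :
  (forall u v, u \in Lf v :|: Lb v -> u = v \/ rank u < rank v) ->
  is_hierarchical Lf Lb.
Proof.
(* lexicographic order on (rank, enum_rank) *)
pose code u := rank u * #|V| + enum_rank u.
have code_inj : injective code.
  move=> u v /(congr1 (modn^~ #|V|)); rewrite !modnMDl !modn_small //.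
  by move/val_inj/enum_rank_inj.
move=> hier; exists (rank_ord code); split; first exact: rank_ord_bij.
move=> u v /hier[-> // | lt_uv]; apply/ltnW/rank_ord_lt.
have lt_ru : enum_rank u < #|V| := ltn_ord _.
have : (rank u).+1 * #|V| <= rank v * #|V| by rewrite leq_mul2r lt_uv orbT.
rewrite /code mulSn; lia.
Qed.

Lemma hl_size_le (V : finType) (Lf Lb : labels V) k :
  (forall v, #|Lf v| + #|Lb v| <= k) -> hl_size Lf Lb <= k * #|V|.
Proof.
move=> le_k; rewrite mulnC -sum_nat_const.
exact: leq_sum.
Qed.

Lemma hl_size_ge_grid (V I J : finType) (Lf Lb : labels V) (f : I -> V) (g : J -> V) :
  injective f -> injective g -> (forall i j, g j \in Lf (f i)) ->
  #|I| * #|J| <= hl_size Lf Lb.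
Proof.
move=> f_inj g_inj grid; rewrite -sum_nat_const.
apply: (@leq_trans (\sum_(v in f @: I) #|Lf v|)).
  rewrite big_imset /=; last by move=> ? ? _ _ /f_inj.
  apply: leq_sum => i _; rewrite -(card_imset (mem J) g_inj).
  by apply/subset_leq_card/subsetP => _ /imsetP[j _ ->].
rewrite /hl_size [X in _ <= X](bigID (mem (f @: I))) /=.
by apply: leq_trans (leq_addr _ _); apply: leq_sum => v _; apply: leq_addr.
Qed.

Lemma card_preimset_seq (T T' : finType) (f : T -> T') (s : seq T') :
  injective f -> #|[set x | f x \in s]| <= size s.
Proof.
move=> f_inj; rewrite -(card_imset _ f_inj); apply: leq_trans (card_size s).
by apply/subset_leq_card/subsetP => _ /imsetP[x + ->]; rewrite inE.
Qed.

Lemma connect_relpre_can (T T' : finType) (f : T -> T') (g : T' -> T) (e : rel T') :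
  cancel f g -> cancel g f -> forall x y, connect (relpre f e) x y = connect e (f x) (f y).
Proof.
move=> fK gK x y; apply/connectP/connectP => [[p xp ->] | [q fxq fy]].
  by exists (map f p); rewrite ?path_map ?last_map.
exists (map g q); first by rewrite -path_map (mapK gK).
by rewrite -(fK x) last_map -fy fK.
Qed.

Section Gadget.
Variable m : nat.

Inductive vertex : predArgType :=
| Center | Src of 'I_m | Hub of 'I_m
| Top of 'I_m & bool | Mid of 'I_m & bool | Low of 'I_m & bool | Sink of 'I_m & bool.

Definition vertex_code (a : vertex) : unit + 'I_m + 'I_m + 'I_m * bool * 'I_4 :=
  match a with
  | Center => inl (inl (inl tt)) | Src i => inl (inl (inr i)) | Hub j => inl (inr j)
  | Top j t => inr (j, t, Ordinal (isT : 0 < 4))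
  | Mid j t => inr (j, t, Ordinal (isT : 1 < 4))
  | Low j t => inr (j, t, Ordinal (isT : 2 < 4))
  | Sink j t => inr (j, t, Ordinal (isT : 3 < 4))
  end.

Definition vertex_decode (c : unit + 'I_m + 'I_m + 'I_m * bool * 'I_4) : vertex :=
  match c with
  | inl (inl (inl _)) => Center | inl (inl (inr i)) => Src i | inl (inr j) => Hub j
  | inr (j, t, k) =>
      match val k with 0 => Top j t | 1 => Mid j t | 2 => Low j t | _ => Sink j t end
  end.

Lemma vertex_codeK : cancel vertex_code vertex_decode. Proof. by case. Qed.

HB.instance Definition _ := Finite.copy vertex (can_type vertex_codeK).

Lemma card_vertex : #|vertex| = 10 * m + 1.
Proof.
have decodeK : cancel vertex_decode vertex_code.
  case=> [[[[]|i]|j]|[[j t] [[|[|[|[|k]]]] lt_k]]] //=;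
  by rewrite (bool_irrelevance lt_k isT).
rewrite (bij_eq_card (Bijective vertex_codeK decodeK)).
by rewrite !card_sum card_unit !card_prod card_bool !card_ord; lia.
Qed.

Definition edge (a b : vertex) : bool :=
  match a, b with
  | Src _, Center => true
  | Center, Hub _ => true
  | Top j t, Mid j' t' | Mid j t, Low j' t' => (j == j') && (t == t')
  | Low j _, Hub j' | Hub j, Sink j' _ => j == j'
  | _, _ => false
  end.

Definition level (a : vertex) : nat :=
  match a with
  | Top _ _ => 0 | Src _ | Mid _ _ => 1 | Center | Low _ _ => 2 | Hub _ => 3 | Sink _ _ => 4
  end.

Lemma edge_level a b : edge a b -> level b = (level a).+1.
Proof. by case: a; case: b. Qed.

Lemma level_le4 a : level a <= 4. Proof. by case: a. Qed.

Definition reach (a b : vertex) : bool :=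
  match a, b with
  | Center, Center => true
  | Src i, Src i' => i == i'
  | Hub j, Hub j' => j == j'
  | Src _, (Center | Hub _ | Sink _ _) | Center, (Hub _ | Sink _ _) => true
  | Top j t, (Top j' t' | Mid j' t' | Low j' t') | Mid j t, (Mid j' t' | Low j' t')
  | Low j t, Low j' t' | Sink j t, Sink j' t' => (j == j') && (t == t')
  | (Top j _ | Mid j _ | Low j _), Hub j' | (Top j _ | Mid j _ | Low j _ | Hub j), Sink j' _ =>
      j == j'
  | _, _ => false
  end.

Lemma reach_refl a : reach a a. Proof. by case: a => /= *; rewrite ?eqxx. Qed.

Ltac subst_eqs := repeat match goal with
  | H : is_true (_ && _) |- _ => case/andP: H => ? ?
  | H : is_true (_ == _) |- _ => move/eqP: H => H; subst
  end.

Ltac case_vertex := case=> [|?|?|? ?|? ?|? ?|? ?].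

Lemma reach_edge a b c : reach a b -> edge b c -> reach a c.
Proof. by move: a b c; do 3 case_vertex; move=> //= *; subst_eqs; rewrite ?eqxx. Qed.

Definition toward (a b : vertex) : vertex :=
  match a, b with
  | Src _, _ => Center
  | Center, (Hub j | Sink j _) | Low j _, _ => Hub j
  | Top j t, _ => Mid j t
  | Mid j t, _ => Low j t
  | _, _ => b
  end.

Lemma reach_toward a b :
  reach a b -> a = b \/ edge a (toward a b) && reach (toward a b) b.
Proof.
move: a b; do 2 case_vertex; move=> //= *; subst_eqs;
  first [by left | by right; rewrite /= ?eqxx].
Qed.

Lemma connect_edgeE a b : connect edge a b = reach a b.
Proof.
apply/idP/idP.
  case/connectP=> p + ->; elim/last_ind: p => [|p c IHp] /=; first by rewrite reach_refl.
  by rewrite rcons_path last_rcons => /andP[/IHp ab bc]; apply: reach_edge ab bc.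
have [k] := ubnP (4 - level a); elim: k a => // k IHk a lt_k ab.
case: (reach_toward ab) => [<- | /andP[a_c cb]]; first exact: connect0.
apply: connect_trans (connect1 a_c) (IHk _ _ cb).
by have := edge_level a_c; have := level_le4 (toward a b); lia.
Qed.

Definition fwd_hubs (a : vertex) : seq vertex :=
  match a with
  | Src _ => [:: a; Center]
  | Top j t => [:: a; Hub j; Mid j t; Low j t]
  | Mid j t => [:: a; Hub j; Low j t]
  | Low j _ => [:: a; Hub j]
  | _ => [:: a]
  end.

Definition bwd_hubs (b : vertex) : seq vertex :=
  match b with
  | Hub _ => [:: b; Center]
  | Sink j _ => [:: b; Hub j; Center]
  | _ => [:: b]
  end.

Definition hub (a b : vertex) : vertex :=
  match a, b with
  | Src _, Src _ | Hub _, _ => a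
  | (Src _ | Center), _ => Center
  | (Top j _ | Mid j _ | Low j _), (Hub _ | Sink _ _) => Hub j
  | _, _ => b
  end.

Lemma hub_spec a b : reach a b ->
  [&& hub a b \in fwd_hubs a, hub a b \in bwd_hubs b,
      reach a (hub a b) & reach (hub a b) b].
Proof.
by move: a b; do 2 case_vertex; move=> //= *; subst_eqs; rewrite !inE ?eqxx ?orTb ?orbT.
Qed.

Definition rank (a : vertex) : nat :=
  match a with
  | Center => 0 | Hub _ => 1 | Src _ | Low _ _ | Sink _ _ => 2 | Mid _ _ => 3 | Top _ _ => 4
  end.

Lemma rank_hubs a h : h \in fwd_hubs a ++ bwd_hubs a -> h = a \/ rank h < rank a.
Proof.
have: all (fun h => (h == a) || (rank h < rank a)) (fwd_hubs a ++ bwd_hubs a).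
  by case: a => /= *; rewrite ?eqxx /= ?orbT.
by move/allP/[apply] => /orP[/eqP|] ?; [left | right].
Qed.

Lemma size_hubs a : size (fwd_hubs a) + size (bwd_hubs a) <= 5.
Proof. by case: a. Qed.

Definition is_hub (v : vertex) : bool := if v is Hub _ then true else false.

Definition top_pair (v : vertex) (t : bool) : vertex * vertex :=
  match v with
  | Top j t0 | Mid j t0 | Low j t0 => (Top j t0, Sink j t)
  | Sink j t0 => (Top j t, Sink j t0)
  | _ => (v, v)
  end.

Lemma top_pair_through v a b : ~~ is_hub v -> level a = 0 -> level b = 4 ->
  reach a v -> reach v b -> exists t, (a, b) = top_pair v t.
Proof. by move: v a b; do 3 case_vertex; move=> //= *; subst_eqs; eexists. Qed.

(* Pairs that, among the hubs, only [Hub j] can cover. *)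
Definition hub_pair (j : 'I_m) (a b : vertex) : bool :=
  match a, b with
  | Top j1 _, Sink j2 _ => (j1 == j) && (j2 == j)
  | Src _, Hub j2 => j2 == j
  | _, _ => false
  end.

Lemma hub_pair_reach j a b : hub_pair j a b -> reach a (Hub j) && reach (Hub j) b.
Proof. by move: a b; do 2 case_vertex; move=> //= *; subst_eqs; rewrite eqxx. Qed.

Lemma hub_pair_only j j' a b :
  hub_pair j a b -> reach a (Hub j') -> reach (Hub j') b -> j' = j.
Proof. by move: a b; do 2 case_vertex; move=> //= *; subst_eqs. Qed.

End Gadget.

Section HardGraph.
Variable m : nat.
Hypothesis m_gt0 : 0 < m.

Local Notation V := 'I_#|vertex m|.
Local Notation n := #|V|.

Definition vtx : V -> vertex m := enum_val.
Definition idx : vertex m -> V := enum_rank.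

Lemma vtxK : cancel vtx idx. Proof. exact: enum_valK. Qed.
Lemma idxK : cancel idx vtx. Proof. exact: enum_rankK. Qed.

Definition hard_graph : rel V := relpre vtx (@edge m).

Lemma hard_edge_level u v : hard_graph u v -> level (vtx v) = (level (vtx u)).+1.
Proof. exact: edge_level. Qed.

Lemma hard_level_lt u : level (vtx u) < #|V|.
Proof. by rewrite card_ord card_vertex; have := level_le4 (vtx u); lia. Qed.

Lemma reachable_hard u w : reachable hard_graph u w = reach (vtx u) (vtx w).
Proof. by rewrite /reachable (connect_relpre_can _ vtxK idxK) connect_edgeE. Qed.

Lemma on_sp_hard u w h :
  on_sp hard_graph u w h = reach (vtx u) (vtx h) && reach (vtx h) (vtx w).
Proof. by rewrite (on_sp_lvl hard_edge_level hard_level_lt) !reachable_hard. Qed.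

Lemma dist_hard u w : reachable hard_graph u w ->
  dist hard_graph u w = level (vtx w) - level (vtx u).
Proof. exact: (dist_lvl hard_edge_level hard_level_lt). Qed.

Definition sparse_fwd : labels V := fun u => [set h | vtx h \in fwd_hubs (vtx u)].
Definition sparse_bwd : labels V := fun w => [set h | vtx h \in bwd_hubs (vtx w)].

Lemma sparse_is_HHL : is_HHL hard_graph sparse_fwd sparse_bwd.
Proof.
split=> [u w | ].
  rewrite reachable_hard => /hub_spec /and4P[hf hb uh hw]; apply/existsP.
  by exists (idx (hub (vtx u) (vtx w))); rewrite on_sp_hard !inE idxK hf hb uh hw.
apply: (hierarchical_of_rank (rank := fun u => rank (vtx u))) => h u.
rewrite !inE -mem_cat => /rank_hubs[/(can_inj vtxK) | ]; by [left | right].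
Qed.

Lemma sparse_size : hl_size sparse_fwd sparse_bwd <= 5 * n.
Proof.
apply: hl_size_le => u.
have vtx_inj : injective vtx := can_inj vtxK.
apply: leq_trans (size_hubs (vtx u)).
by apply: leq_add; apply: card_preimset_seq.
Qed.

Definition hub_ord j : V := idx (Hub j).
Definition src_ord i : V := idx (Src i).

Lemma pair_weight_top j t t' :
  pair_weight hard_graph (idx (Top j t)) (idx (Sink j t')) = n ^ 4.
Proof.
rewrite pair_weight_dist4 // dist_hard ?reachable_hard !idxK //.
by rewrite /= eqxx.
Qed.

Lemma center_weight_nonhub Lf Lb v : ~~ is_hub (vtx v) ->
  center_weight hard_graph Lf Lb v <= 3 * n ^ 4.
Proof.
move=> nonhub; pose P t := (idx (top_pair (vtx v) t).1, idx (top_pair (vtx v) t).2).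
have one q : \sum_(p : V * V) (p == q : nat) = 1.
  by rewrite (bigD1 q) //= eqxx big1 // => p /negbTE ->.
rewrite center_weight_pairs big_mkcond /=.
apply: (@leq_trans (\sum_(p : V * V) (n ^ 2 + n ^ 4 * ((p == P true) + (p == P false))))).
  apply: leq_sum => -[u w] _ /=; case: ifP => // /andP[/andP[uw _] sp].
  move: (sp); rewrite on_sp_hard => /andP[uv vw].
  have := dist_hard uw; have := level_le4 (vtx w); have := reachable_lvl hard_edge_level uw.
  have [/andP[/eqP u0 /eqP w4] _ _ d4 | not_top le_uw w_le4 d_le] :=
    boolP ((level (vtx u) == 0) && (level (vtx w) == 4)).
    have [t /(congr1 (fun p => (idx p.1, idx p.2)))] := top_pair_through nonhub u0 w4 uv vw.
    rewrite /= !vtxK => uwP; rewrite pair_weight_dist4; last by rewrite d4 u0 w4.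
    have -> : (u, w) = P t := uwP.
    rewrite -[X in X <= _]add0n leq_add // leq_pmulr //.
    by case: t {uwP}; rewrite eqxx ?addn1.
  apply: leq_trans (pair_weight_dist_le3 _) (leq_addr _ _).
  by rewrite d_le; move: not_top; rewrite negb_and; case/orP=> /eqP; lia.
rewrite big_split /= sum_nat_const card_prod mulnn -expnD -big_distrr /= big_split /=.
by rewrite !one; lia.
Qed.

Lemma center_weight_hub Lf Lb j :
  (forall t t', uncov hard_graph Lf Lb (idx (Top j t)) (idx (Sink j t'))) ->
  4 * n ^ 4 <= center_weight hard_graph Lf Lb (hub_ord j).
Proof.
move=> top_uncov; pose tp (tt : bool * bool) := (idx (Top j tt.1), idx (Sink j tt.2)).
have tp_inj : injective tp by move=> [? ?] [? ?] [/(can_inj idxK) [->] /(can_inj idxK) [->]].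
have tp_arc tt : center_arc hard_graph Lf Lb (hub_ord j) (tp tt).1 (tp tt).2.
  by rewrite /center_arc top_uncov on_sp_hard !idxK /= eqxx.
rewrite center_weight_pairs.
apply: (@leq_trans (\sum_(p in tp @: setT) pair_weight hard_graph p.1 p.2)); last first.
  rewrite [X in X <= _]big_mkcond [X in _ <= X]big_mkcond; apply: leq_sum => p _.
  by case: imsetP => // -[tt _ ->]; rewrite tp_arc.
rewrite big_imset /=; last by move=> ? ? _ _ /tp_inj.
rewrite (eq_bigr (fun _ => n ^ 4)) => [|tt _]; last exact: pair_weight_top.
by rewrite sum_nat_const cardsT card_prod card_bool.
Qed.

Definition greedy_inv (S : {set V}) (Lf Lb : labels V) : Prop :=
  (forall j, hub_ord j \notin S ->
     forall u w, hub_pair j (vtx u) (vtx w) -> uncov hard_graph Lf Lb u w) /\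
  (forall j, hub_ord j \in S -> forall i, hub_ord j \in Lf (src_ord i)).

Lemma greedy_inv0 : greedy_inv set0 (@empty_labels V) (@empty_labels V).
Proof.
split=> [j _ u w /hub_pair_reach /andP[uj jw] | j]; last by rewrite inE.
have uw : reachable hard_graph u w.
  apply: (connect_trans (y := hub_ord j));
  by rewrite -/(reachable _ _ _) reachable_hard /hub_ord idxK.
by rewrite /uncov uw; apply/existsP => -[h]; rewrite inE.
Qed.

Lemma greedy_picks_hub S Lf Lb v j : greedy_inv S Lf Lb -> hub_ord j \notin S ->
  (forall v', v' \notin S ->
     center_weight hard_graph Lf Lb v' <= center_weight hard_graph Lf Lb v) ->
  is_hub (vtx v).
Proof.
case=> pending _ jS vmax; apply: contraT => nonhub.
have : 4 * n ^ 4 <= 3 * n ^ 4.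
  apply: leq_trans (leq_trans (vmax _ jS) (center_weight_nonhub _ _ nonhub)).
  by apply: center_weight_hub => t t'; apply: (pending _ jS); rewrite !idxK /= eqxx.
by rewrite leq_mul2r expn_eq0 card_ord card_vertex; lia.
Qed.

Lemma greedy_inv_step S Lf Lb S' Lf' Lb' : greedy_inv S Lf Lb ->
  dhhl_step hard_graph S Lf Lb S' Lf' Lb' -> greedy_inv S' Lf' Lb'.
Proof.
move=> inv [v [vS vmax -> eq_f eq_b]]; have [pending hubs_in] := inv.
have Lf'E : Lf' =1 select_fwd hard_graph Lf Lb v := eq_f.
have Lb'E : Lb' =1 select_bwd hard_graph Lf Lb v := eq_b.
split=> j; rewrite in_setU1.
  rewrite negb_or => /andP[jv jS] u w hp; rewrite (uncov_ext _ u w Lf'E Lb'E).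
  apply: uncov_select (pending _ jS _ _ hp) _.
  have := greedy_picks_hub inv jS vmax; case Ev: (vtx v) => [||j'||||] // _.
  rewrite on_sp_hard Ev; apply/negP => /andP[uj' j'w].
  by move: jv; rewrite -(hub_pair_only hp uj' j'w) /hub_ord -Ev vtxK eqxx.
case/predU1P => [jv | jS] i; rewrite Lf'E; last first.
  exact: subsetP (select_fwd_sub hard_graph Lf Lb v _) _ (hubs_in _ jS i).
have jS : hub_ord j \notin S by rewrite jv.
rewrite -jv; apply: (mem_select_fwd (w := hub_ord j)); rewrite /center_arc.
by rewrite (pending _ jS) ?on_sp_hard /hub_ord /src_ord ?idxK //= eqxx.
Qed.

Lemma greedy_inv_run S Lf Lb Rf Rb : dhhl_run hard_graph S Lf Lb Rf Rb ->
  greedy_inv S Lf Lb -> forall i j, hub_ord j \in Rf (src_ord i).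
Proof.
elim=> {S Lf Lb Rf Rb} [S Lf Lb all_cov | S Lf Lb S' Lf' Lb' Rf Rb _ step _ IH] inv.
  case: inv => pending hubs_in i j; apply: hubs_in; apply: contraT => jS.
  have := all_cov (idx (Top j true)) (idx (Sink j true)).
  by rewrite (pending _ jS) // !idxK /= eqxx.
exact: IH (greedy_inv_step inv step).
Qed.

Lemma dhhl_output_size Rf Rb : dhhl_output hard_graph Rf Rb -> m * m <= hl_size Rf Rb.
Proof.
move=> /greedy_inv_run/(_ greedy_inv0) grid; rewrite -{1 2}(card_ord m).
by apply: hl_size_ge_grid grid => ? ? /(can_inj idxK) [].
Qed.

End HardGraph.

Theorem mainTheorem8 :
  exists a C : nat,
    forall N : nat, exists n : nat, (N <= n)%N /\
      exists e : rel 'I_n,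
        (exists Rf Rb, dhhl_output e Rf Rb) /\
        (forall Rf Rb, dhhl_output e Rf Rb ->
           (n ^ 3 <= (a * hl_size Rf Rb) ^ 2)%N) /\
        (exists Lf Lb, is_HHL e Lf Lb /\ (hl_size Lf Lb <= C * n)%N).
Proof.
exists 37, 5 => N; have m_gt0 : 0 < N.+1 by [].
exists #|vertex N.+1|; split; first by rewrite card_vertex; lia.
exists (@hard_graph N.+1); split; [|split].
- exact: dhhl_output_exists (@hard_edge_level _) (hard_level_lt m_gt0).
- move=> Rf Rb /(dhhl_output_size m_gt0) le_size.
  apply: (@leq_trans ((37 * (N.+1 * N.+1)) ^ 2)); first by rewrite card_vertex; nia.
  by rewrite leq_exp2r // leq_mul2l le_size orbT.
- exists (@sparse_fwd N.+1), (@sparse_bwd N.+1); split; first exact: sparse_is_HHL.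
  by have := @sparse_size N.+1; rewrite card_ord.
Qed.
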